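(* Let $k\ge 0$ and $n>2k+1$ be integers, and let $\sigma$ be a maximal simplex of $\mathrm{VR}(\mathbb{Z}^2;k)$. Then $\pi_n(\sigma)$ is a maximal simplex of $\mathrm{VR}(T_{n,n};k)$.
   Context: $\mathbb{Z}^2$ carries the $l^1$ metric. $T_{n,n}=\mathbb{Z}^2/(n\mathbb{Z}\times n\mathbb{Z})$ with quotient map $\pi_n$ (reduction of both coordinates mod $n$) and quotient metric $d([x],[y])=\min\{d(x',y'): \pi_n(x')=[x],\pi_n(y')=[y]\}$. $\mathrm{VR}(X;r)$ is the simplicial complex on vertex set $X$ whose simplices are the finite nonempty subsets of diameter at most $r$; a maximal simplex is one not properly contained in another simplex. *)

From HB Require Import structures.
From mathcomp Require Import all_boot all_order all_algebra.
From mathcomp Require Import finmap.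
Unset Printing Implicit Defensive.
Import Order.TTheory GRing.Theory Num.Theory.

Local Open Scope fset_scope.

Definition Z2 := (int * int)%type.

Definition l1dist (x y : Z2) : nat := (`|x.1 - y.1| + `|x.2 - y.2|)%N.

(* Points of the torus T_{n,n} = Z^2/(nZ x nZ).  'Z_n is Z/nZ for n >= 2
   (the theorem's hypotheses force n >= 2). *)
Definition Tnn (n : nat) := ('Z_n * 'Z_n)%type.

Definition pi_n (n : nat) (x : Z2) : Tnn n := ((x.1)%:~R, (x.2)%:~R)%R.

Definition torus_dist_is (n : nat) (p q : Tnn n) (d : nat) : Prop :=
  (exists x' y', pi_n n x' = p /\ pi_n n y' = q /\ l1dist x' y' = d) /\
  (forall x' y', pi_n n x' = p -> pi_n n y' = q -> (d <= l1dist x' y')%N).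

Definition VR_Z2_simplex (r : nat) (s : {fset Z2}) : Prop :=
  s != fset0 /\ forall x y, x \in s -> y \in s -> (l1dist x y <= r)%N.

Definition VR_Z2_maximal (r : nat) (s : {fset Z2}) : Prop :=
  VR_Z2_simplex r s /\
  forall t, VR_Z2_simplex r t -> s `<=` t -> t = s.

Definition VR_T_simplex (n r : nat) (s : {fset Tnn n}) : Prop :=
  s != fset0 /\
  forall p q d, p \in s -> q \in s -> torus_dist_is n p q d -> (d <= r)%N.

Definition VR_T_maximal (n r : nat) (s : {fset Tnn n}) : Prop :=
  VR_T_simplex n r s /\
  forall t, VR_T_simplex n r t -> s `<=` t -> t = s.

Definition pi_n_set (n : nat) (s : {fset Z2}) : {fset Tnn n} :=
  [fset pi_n n x | x in s].

From mathcomp Require Import all_boot all_order all_algebra finmap zify.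
From Stdlib Require Import Classical Wf_nat.
Import GRing.Theory Num.Theory.

Local Open Scope ring_scope.

(* In the coordinates rot1 = x1 + x2, rot2 = x1 - x2 the l^1 metric of Z^2
   becomes the l^oo metric.  Let t be a simplex of the torus containing
   pi_n(sigma) and p a vertex of t; lift p to z within k of some x0 in sigma.
   If z were farther than k from some x1 in sigma, another lift z + c of p
   would be within k of x1, and n > 2k + 1 forces the period c to be +-n e_i,
   which shifts both rotated coordinates by +-n.  The corner m of the box
   spanned by x0 and x1 taking rot1 from x1 and rot2 from x0 is within k of all
   of sigma, hence lies in sigma by maximality; but a lift of p within k of m
   would need a period shifting rot1 by +-n and rot2 by 0, and nZ x nZ has no
   such element.  So z is within k of all of sigma, z lies in sigma, and p is
   in pi_n(sigma). *)

Section ZpProjection.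

Context {n : nat} (n_gt1 : (1 < n)%N).

Lemma natr_Zp_eq0 (m : nat) : ((m%:R : 'Z_n) == 0) = (n %| m)%N.
Proof. by rewrite /dvdn -(val_Zp_nat n_gt1) -val_eqE. Qed.

Lemma intr_Zp_eq0 (c : int) : ((c%:~R : 'Z_n) == 0) = (n%:Z %| c)%Z.
Proof. by case: c => m; rewrite dvdzE ?NegzE ?mulrNz ?oppr_eq0 natr_Zp_eq0. Qed.

Lemma intr_Zp_eq (a b : int) : ((a%:~R : 'Z_n) == b%:~R) = (n%:Z %| a - b)%Z.
Proof. by rewrite -intr_Zp_eq0 intrB subr_eq0. Qed.

Lemma pi_n_eq (x y : Z2) :
  pi_n n x = pi_n n y <-> (n%:Z %| x.1 - y.1)%Z /\ (n%:Z %| x.2 - y.2)%Z.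
Proof.
rewrite -!intr_Zp_eq; case: x y => [x1 x2] [y1 y2]; rewrite /pi_n /=.
by split=> [[-> ->] | [/eqP -> /eqP ->]].
Qed.

Lemma pi_n_surj (p : Tnn n) : exists x, pi_n n x = p.
Proof.
case: p => p1 p2; exists ((p1 : nat)%:Z, (p2 : nat)%:Z).
by rewrite /pi_n /= -!pmulrn !natr_Zp.
Qed.

Lemma torus_dist_exists (p q : Tnn n) : exists d, torus_dist_is n p q d.
Proof.
pose realized d := exists x y, pi_n n x = p /\ pi_n n y = q /\ l1dist x y = d.
have [x px] := pi_n_surj p; have [y qy] := pi_n_surj q.
have [d [[realized_d d_min] _]] :=
  dec_inh_nat_subset_has_unique_least_element realized (fun d => classic _)
    (ex_intro _ _ (ex_intro _ x (ex_intro _ y (conj px (conj qy erefl))))).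
exists d; split=> // x' y' px' qy'.
by apply/leP/d_min; exists x', y'.
Qed.

Lemma VR_T_simplex_lift {k : nat} {t : {fset Tnn n}} {p : Tnn n} {x : Z2} :
  VR_T_simplex n k t -> p \in t -> pi_n n x \in t ->
  exists w, pi_n n w = p /\ (l1dist w x <= k)%N.
Proof.
move=> [_ t_diam] pt xt; have [d dist_d] := torus_dist_exists p (pi_n n x).
have d_le_k := t_diam _ _ _ pt xt dist_d.
case: dist_d => [[x' [y' [px' [y'x dist_x'y']]]] _].
exists (x.1 - y'.1 + x'.1, x.2 - y'.2 + x'.2); split.
  by rewrite -px'; apply/pi_n_eq; rewrite /= !addrK; apply/pi_n_eq.
suff -> : l1dist (x.1 - y'.1 + x'.1, x.2 - y'.2 + x'.2) x = l1dist x' y'.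
  by rewrite dist_x'y'.
by rewrite /l1dist /=; congr (absz _ + absz _)%N; lia.
Qed.

Lemma VR_T_simplex_pi_n_set (k : nat) (sigma : {fset Z2}) :
  VR_Z2_simplex k sigma -> VR_T_simplex n k (pi_n_set n sigma).
Proof.
move=> [/fset0Pn[x xs] sigma_diam]; split.
  by apply/fset0Pn; exists (pi_n n x); apply: in_imfset.
move=> _ _ d /imfsetP[y ys ->] /imfsetP[z zs ->] [_ d_min].
exact: leq_trans (d_min y z erefl erefl) (sigma_diam y z ys zs).
Qed.

End ZpProjection.

Lemma l1distC (x y : Z2) : l1dist x y = l1dist y x.
Proof. rewrite /l1dist; lia. Qed.

Lemma l1distxx (x : Z2) : l1dist x x = 0%N.
Proof. rewrite /l1dist; lia. Qed.

Lemma VR_Z2_maximal_mem {k : nat} {sigma : {fset Z2}} {y : Z2} :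
  VR_Z2_maximal k sigma -> (forall x, x \in sigma -> (l1dist y x <= k)%N) ->
  y \in sigma.
Proof.
move=> [[_ sigma_diam] sigma_max] y_near.
suff <- : (y |` sigma)%fset = sigma by rewrite fset1U1.
apply: sigma_max; last exact: fsubsetUr.
split=> [|a b]; first by apply/fset0Pn; exists y; rewrite fset1U1.
rewrite !in_fset1U => /predU1P[-> | ?] /predU1P[-> | ?].
- by rewrite l1distxx.
- exact: y_near.
- by rewrite l1distC; apply: y_near.
- exact: sigma_diam.
Qed.

Definition rot1 (x : Z2) : int := x.1 + x.2.
Definition rot2 (x : Z2) : int := x.1 - x.2.

Lemma l1dist_le (x y : Z2) (r : nat) :
  (l1dist x y <= r)%N =
  (`|rot1 x - rot1 y| <= r%:Z) && (`|rot2 x - rot2 y| <= r%:Z).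
Proof. rewrite /l1dist /rot1 /rot2; apply/idP/andP; lia. Qed.

Lemma ltr_norm_pM2r {a b c : int} : 0 < c -> `|a * c| < b * c -> `|a| < b.
Proof. by move=> c_gt0; rewrite normrM (gtr0_norm c_gt0) ltr_pM2r. Qed.

Lemma exists_corner (x0 x1 : Z2) : exists m : Z2,
  [/\ rot1 m = rot1 x1, `|rot2 m - rot2 x0| <= 1
    & rot2 x0 <= rot2 m <= rot2 x1 \/ rot2 x1 <= rot2 m <= rot2 x0].
Proof.
(* rot1 and rot2 of a point have the same parity, whence the rounding of
   rot2 x0 by one towards rot2 x1. *)
have [h [r [s_eq r01]]] : exists h r : int,
    rot2 x0 + rot1 x1 = 2 * h + r /\ 0 <= r <= 1.
  exists ((rot2 x0 + rot1 x1) %/ 2)%Z, ((rot2 x0 + rot1 x1) %% 2)%Z.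
  by rewrite mulrC -divz_eq modz_ge0 //= -ltzD1 ltz_pmod.
move: s_eq; rewrite /rot1 /rot2 => s_eq.
have [le01 | lt10] := lerP (x0.1 - x0.2) (x1.1 - x1.2).
- by exists (h + r, x1.1 + x1.2 - (h + r)); split; rewrite /=; lia.
- by exists (h, x1.1 + x1.2 - h); split; rewrite /=; lia.
Qed.

Lemma l1dist_le_corner {r : nat} {x0 x1 m s : Z2} :
  rot1 m = rot1 x1 ->
  rot2 x0 <= rot2 m <= rot2 x1 \/ rot2 x1 <= rot2 m <= rot2 x0 ->
  (l1dist s x0 <= r)%N -> (l1dist s x1 <= r)%N -> (l1dist s m <= r)%N.
Proof. rewrite !l1dist_le; lia. Qed.

Lemma lifts_far_from_corner {n k : nat} {x0 x1 z w m : Z2} :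
  (2 * k + 1 < n)%N ->
  (l1dist x0 x1 <= k)%N -> (l1dist z x0 <= k)%N -> (l1dist w x1 <= k)%N ->
  (k < l1dist z x1)%N -> pi_n n w = pi_n n z ->
  rot1 m = rot1 x1 -> `|rot2 m - rot2 x0| <= 1 ->
  forall w', pi_n n w' = pi_n n z -> (k < l1dist w' m)%N.
Proof.
move=> n_big; have n_gt1 : (1 < n)%N by lia.
move=> + + + + /(pi_n_eq n_gt1)[/dvdzP[i wz1] /dvdzP[j wz2]] + + w'
  /(pi_n_eq n_gt1)[/dvdzP[i' w'z1] /dvdzP[j' w'z2]].
rewrite ltnNge !l1dist_le /rot1 /rot2 !ler_norml.
move=> /andP[/andP[u01 u01'] /andP[v01 v01']].
move=> /andP[/andP[uz0 uz0'] /andP[vz0 vz0']].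
move=> /andP[/andP[uw1 uw1'] /andP[vw1 vw1']] zx1 um /andP[vm vm'].
rewrite ltnNge !l1dist_le /rot1 /rot2 !ler_norml.
apply/negP => /andP[/andP[uw'm uw'm'] /andP[vw'm vw'm']].
have n_gt0 : 0 < n%:Z by lia.
have ij_sum : `|i + j| < 2.
  by apply: (ltr_norm_pM2r n_gt0); rewrite mulrDl -wz1 -wz2 ltr_norml; lia.
have ij_diff : `|i - j| < 2.
  by apply: (ltr_norm_pM2r n_gt0); rewrite mulrBl -wz1 -wz2 ltr_norml; lia.
have ij_ne0 : ~ (i = 0 /\ j = 0).
  by move=> [i0 j0]; move: zx1 wz1 wz2; rewrite i0 j0 !mul0r; lia.
have ij'_sum : i' + j' = i + j.
  suff : `|i' + j' - (i + j)| < 1 by lia.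
  apply: (ltr_norm_pM2r n_gt0).
  by rewrite mulrBl !mulrDl -wz1 -wz2 -w'z1 -w'z2 ltr_norml; lia.
have ij'_diff : i' - j' = 0.
  suff : `|i' - j'| < 1 by lia.
  by apply: (ltr_norm_pM2r n_gt0); rewrite mulrBl -w'z1 -w'z2 ltr_norml; lia.
lia.
Qed.

Lemma lift_near_all_vertices {k n : nat} {sigma : {fset Z2}}
    {t : {fset Tnn n}} {x0 z : Z2} :
  (2 * k + 1 < n)%N -> VR_Z2_maximal k sigma -> VR_T_simplex n k t ->
  (pi_n_set n sigma `<=` t)%fset -> pi_n n z \in t ->
  x0 \in sigma -> (l1dist z x0 <= k)%N ->
  forall x1, x1 \in sigma -> (l1dist z x1 <= k)%N.
Proof.
move=> n_big sigma_max t_simplex sub zt x0s zx0 x1 x1s.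
have n_gt1 : (1 < n)%N by lia.
have [[_ sigma_diam] _] := sigma_max.
have sigma_t x : x \in sigma -> pi_n n x \in t.
  by move=> xs; apply: (fsubsetP sub); apply: in_imfset.
apply: contraT; rewrite -ltnNge => zx1.
have [w [wz wx1]] := VR_T_simplex_lift n_gt1 t_simplex zt (sigma_t _ x1s).
have [m [m1 m2 m_between]] := exists_corner x0 x1.
have ms : m \in sigma.
  apply: (VR_Z2_maximal_mem sigma_max) => s ss; rewrite l1distC.
  exact: l1dist_le_corner m1 m_between
    (sigma_diam _ _ ss x0s) (sigma_diam _ _ ss x1s).
have [w' [w'z w'm]] := VR_T_simplex_lift n_gt1 t_simplex zt (sigma_t _ ms).
have := lifts_far_from_corner n_big (sigma_diam _ _ x0s x1s) zx0 wx1 zx1 wz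
  m1 m2 _ w'z.
by rewrite ltnNge w'm.
Qed.

Theorem lemma5p2 (k n : nat) (sigma : {fset Z2}) :
  (2 * k + 1 < n)%N ->
  VR_Z2_maximal k sigma ->
  VR_T_maximal n k (pi_n_set n sigma).
Proof.
move=> n_big sigma_max; have n_gt1 : (1 < n)%N by lia.
have [sigma_simplex _] := sigma_max.
split=> [|t t_simplex sub]; first exact: VR_T_simplex_pi_n_set.
apply/eqP; rewrite eqEfsubset sub andbT; apply/fsubsetP => p pt.
have [/fset0Pn[x0 x0s] _] := sigma_simplex.
have x0t : pi_n n x0 \in t by apply: (fsubsetP sub); apply: in_imfset.
have [z [pz zx0]] := VR_T_simplex_lift n_gt1 t_simplex pt x0t; subst p.
apply: in_imfset; apply: (VR_Z2_maximal_mem sigma_max).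
exact: (lift_near_all_vertices n_big sigma_max t_simplex sub pt x0s zx0).
Qed.
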